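(* Let $\Gamma,P,\mu$ be real numbers with $0\le\Gamma<1$ and $0\le P\le1$, and set \[ B_G^{(2)}:=[-4\Gamma P+2P-2\Gamma+3]+\mu[3-2\Gamma-4P]. \] (i) If $-1/3<\mu<0$ and $|2\Gamma-1|\le\min\{1,(1-P)/P\}$, then $B_G^{(2)}>0$. (ii) If $\mu=0$ and $|2\Gamma-1|<\min\{1,(1-P)/P\}$, then $B_G^{(2)}>0$. Here $(1-P)/P$ is interpreted as $+\infty$ when $P=0$.
   Context: In the application, $\Gamma=\Gamma(k)\in[0,1]$ is the fraction of the potential enstrophy spectrum at wavenumber $k$ contained in the upper layer, $P=P(k)\in[0,1]$ is the fraction of the energy spectrum at $k$ that is baroclinic, and $\mu$ is the Ekman extrapolation parameter; $B_G^{(2)}$ is a coefficient in the potential enstrophy dissipation rate spectrum of the asymmetric Ekman term. *)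

From Stdlib Require Import Reals.
Open Scope R_scope.

Definition BG2 (G P mu : R) : R :=
  (-4 * G * P + 2 * P - 2 * G + 3) + mu * (3 - 2 * G - 4 * P).

(* min{1, (1-P)/P}, with (1-P)/P read as +oo when P = 0 (so the min is 1). *)
Definition min_bound (P : R) : R :=
  if Req_EM_T P 0 then 1 else Rmin 1 ((1 - P) / P).

(* With x = 2Γ - 1, B_G^(2) = A + μ C where A = 2 - x(1 + 2P) and
   C = 2 - x - 4P.  The hypothesis on |x| only enters through the two upper
   bounds x <= 1 and xP <= 1 - P, which bound A from below by both 1 - 2P and
   2P - 1, hence by |1 - 2P| >= 0 (strictly so in case (ii)).  For case (i),
   B_G^(2) is affine in μ, nonnegative at μ = 0 and positive at μ = -1/3, hence
   positive on the open interval between them. *)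

From Stdlib Require Import Reals Lra Psatz.
Open Scope R_scope.

Lemma min_bound_spec (P : R) :
  0 <= P -> min_bound P <= 1 /\ min_bound P * P <= 1 - P.
Proof.
  intros HP; unfold min_bound; destruct (Req_EM_T P 0) as [-> | HP0].
  - lra.
  - pose proof (Rmin_l 1 ((1 - P) / P)) as Hmin1.
    pose proof (Rmin_r 1 ((1 - P) / P)) as Hmin2.
    assert (Hquot : (1 - P) / P * P = 1 - P) by (field; lra).
    split; nra.
Qed.

Lemma abs_le_min_bound (x P : R) :
  0 <= P -> Rabs x <= min_bound P -> x <= 1 /\ x * P <= 1 - P.
Proof.
  intros HP Hx.
  pose proof (Rle_abs x); pose proof (min_bound_spec P HP).
  split; nra.
Qed.

Lemma abs_lt_min_bound (x P : R) :
  0 <= P -> Rabs x < min_bound P -> x < 1 /\ x * P < 1 - P.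
Proof.
  intros HP Hx.
  pose proof (Rle_abs x); pose proof (min_bound_spec P HP).
  split; [lra |].
  destruct (Req_dec P 0) as [-> | HP0]; nra.
Qed.

Lemma BG2_centered (G P mu : R) :
  BG2 G P mu = 2 - (2 * G - 1) * (1 + 2 * P) + mu * (2 - (2 * G - 1) - 4 * P).
Proof. unfold BG2; ring. Qed.

Lemma centered_coeff_ge0 (x P : R) :
  0 <= P -> x <= 1 -> x * P <= 1 - P -> 0 <= 2 - x * (1 + 2 * P).
Proof.
  intros HP Hx HxP.
  assert (Hlow1 : 1 - 2 * P <= 2 - x * (1 + 2 * P)) by nra.
  assert (Hlow2 : 2 * P - 1 <= 2 - x * (1 + 2 * P)) by lra.
  lra.
Qed.

Lemma centered_coeff_gt0 (x P : R) :
  0 <= P -> x < 1 -> x * P < 1 - P -> 0 < 2 - x * (1 + 2 * P).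
Proof.
  intros HP Hx HxP.
  assert (Hlow1 : 1 - 2 * P < 2 - x * (1 + 2 * P)) by nra.
  assert (Hlow2 : 2 * P - 1 < 2 - x * (1 + 2 * P)) by lra.
  lra.
Qed.

Lemma centered_BG2_at_minus_third_gt0 (x P : R) :
  0 <= P <= 1 -> x <= 1 -> x * P <= 1 - P ->
  0 < 2 - x * (1 + 2 * P) + (-1/3) * (2 - x - 4 * P).
Proof.
  intros HP Hx HxP.
  assert (Hlow1 : 1 - P <= 2 + 2 * P - x * (1 + 3 * P)) by nra.
  assert (Hlow2 : 5 * P - 2 <= 2 + 2 * P - x * (1 + 3 * P)) by lra.
  lra.
Qed.

Lemma affine_gt0_between (a c m mu : R) :
  m < mu < 0 -> 0 <= a -> 0 < a + m * c -> 0 < a + mu * c.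
Proof.
  intros [Hm Hmu] Ha Hend.
  assert (Hconvex : m * (a + mu * c) = (m - mu) * a + mu * (a + m * c)) by ring.
  nra.
Qed.

Theorem proposition5 (G P mu : R) :
  0 <= G < 1 -> 0 <= P <= 1 ->
  ((-1/3 < mu < 0 -> Rabs (2 * G - 1) <= min_bound P -> BG2 G P mu > 0) /\
   (mu = 0 -> Rabs (2 * G - 1) < min_bound P -> BG2 G P mu > 0)).
Proof.
  intros _ HP; rewrite BG2_centered; split.
  - intros Hmu Hbound.
    destruct (abs_le_min_bound _ _ (proj1 HP) Hbound) as [Hx HxP].
    apply Rlt_gt, (affine_gt0_between _ _ (-1/3)); [exact Hmu | |].
    + exact (centered_coeff_ge0 _ _ (proj1 HP) Hx HxP).
    + exact (centered_BG2_at_minus_third_gt0 _ _ HP Hx HxP).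
  - intros -> Hbound.
    destruct (abs_lt_min_bound _ _ (proj1 HP) Hbound) as [Hx HxP].
    pose proof (centered_coeff_gt0 _ _ (proj1 HP) Hx HxP).
    lra.
Qed.
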